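(* Let $p$ and $q$ be integers such that $p\le -2$, $q\ge 4$ and $q>|p|+1$. Then $$\begin{aligned}\sum_{k = 1}^\infty \Big(\frac{-27F_p F_{p + q}}{F_q^2} \Big)^{k}\frac{F_{(2p + q)k}}{k^2 \binom{3k}{k}} &= \frac{6}{\sqrt 5} \Bigg( \arctan ^2 \bigg( \frac{\sqrt 3\,\sqrt[3]{F_{p + q}} }{2\sqrt[3]{\alpha^q F_p} + \sqrt[3]{F_{p + q}} } \bigg) - \arctan ^2 \bigg( \frac{\sqrt 3 \sqrt[3]{F_p}}{2\sqrt[3]{\alpha^qF_{p + q}} +(-1)^q \sqrt[3]{F_p} } \bigg) \Bigg)\\ &\quad - \frac{\sqrt 5}{10}\Bigg( \log ^2 \bigg( \frac{(-1)^pF_q}{ \big(\sqrt[3]{\alpha^pF_{p+q}} - \sqrt[3]{\alpha^{p+q}F_{p}} \big)^3 }\bigg) - \log^2 \bigg( \frac{\alpha ^{p + q} F_q }{\big(\sqrt[3]{\alpha ^q F_{p + q}} -(-1)^q \sqrt[3]{F_p}\big)^3 } \bigg ) \Bigg),\end{aligned}$$ and $$\begin{aligned}\sum_{k = 1}^\infty \Big(\frac{- 27F_pF_{p + q}}{F_q^2} \Big)^k \frac{L_{(2p + q)k}}{k^2\binom{3k}{k}} &= 6\Bigg( \arctan ^2 \bigg( \frac{\sqrt 3\,\sqrt[3]{F_{p + q}}}{2\sqrt[3]{\alpha^q F_p} + \sqrt[3]{F_{p + q}} } \bigg) + \arctan ^2 \bigg( \frac{\sqrt 3 \sqrt[3]{F_p}}{2\sqrt[3]{\alpha^qF_{p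 + q}} +(-1)^q \sqrt[3]{F_p} } \bigg) \Bigg)\\ &\quad - \frac{1}{2}\Bigg( \log ^2 \bigg( \frac{(-1)^p F_q}{\big(\sqrt[3]{\alpha^pF_{p+q}} - \sqrt[3]{\alpha^{p+q}F_{p}} \big)^3 }\bigg) + \log^2 \bigg( \frac{\alpha ^{p + q} F_q }{\big(\sqrt[3]{\alpha ^q F_{p + q}} -(-1)^q \sqrt[3]{F_p}\big)^3 } \bigg ) \Bigg).\end{aligned}$$
   Context: $F_n$ and $L_n$ are the Fibonacci and Lucas numbers, defined by $F_0=0$, $F_1=1$, $L_0=2$, $L_1=1$, $X_n=X_{n-1}+X_{n-2}$, and extended to negative indices by $F_{-j}=(-1)^{j-1}F_j$, $L_{-j}=(-1)^jL_j$. $\alpha=(1+\sqrt5)/2$. $\sqrt[3]{t}$ denotes the real cube root (negative for $t<0$). *)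

From Stdlib Require Import Reals ZArith.
From Stdlib Require Binomial.
From Coquelicot Require Import Coquelicot.
Open Scope R_scope.

Fixpoint fib_pair (n : nat) : R * R :=
  match n with
  | O => (0, 1)
  | S m => let '(a, b) := fib_pair m in (b, a + b)
  end.
Definition fibn (n : nat) : R := fst (fib_pair n).

Fixpoint luc_pair (n : nat) : R * R :=
  match n with
  | O => (2, 1)
  | S m => let '(a, b) := luc_pair m in (b, a + b)
  end.
Definition lucn (n : nat) : R := fst (luc_pair n).

Definition Fib (z : Z) : R :=
  if (0 <=? z)%Z then fibn (Z.to_nat z)
  else (-1) ^ (Z.to_nat (- z) - 1) * fibn (Z.to_nat (- z)).
Definition Luc (z : Z) : R :=
  if (0 <=? z)%Z then lucn (Z.to_nat z)
  else (-1) ^ (Z.to_nat (- z)) * lucn (Z.to_nat (- z)).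

Definition alpha : R := (1 + sqrt 5) / 2.

Definition cbrt (t : R) : R :=
  match Rlt_dec 0 t with
  | left _ => Rpower t (1/3)
  | right _ => match Rlt_dec t 0 with
               | left _ => - Rpower (- t) (1/3)
               | right _ => 0
               end
  end.

Definition binom (n k : nat) : R := Binomial.C n k.

Definition ratio (p q : Z) : R := -27 * Fib p * Fib (p + q) / (Fib q) ^ 2.

Definition theta1 (p q : Z) : R :=
  atan (sqrt 3 * cbrt (Fib (p + q)) /
        (2 * cbrt (powerRZ alpha q * Fib p) + cbrt (Fib (p + q)))).
Definition theta2 (p q : Z) : R :=
  atan (sqrt 3 * cbrt (Fib p) /
        (2 * cbrt (powerRZ alpha q * Fib (p + q)) + powerRZ (-1) q * cbrt (Fib p))).
Definition lambda1 (p q : Z) : R :=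
  ln (powerRZ (-1) p * Fib q /
      (cbrt (powerRZ alpha p * Fib (p + q)) - cbrt (powerRZ alpha (p + q) * Fib p)) ^ 3).
Definition lambda2 (p q : Z) : R :=
  ln (powerRZ alpha (p + q) * Fib q /
      (cbrt (powerRZ alpha q * Fib (p + q)) - powerRZ (-1) q * cbrt (Fib p)) ^ 3).

Definition term (X : Z -> R) (p q : Z) (k : nat) : R :=
  (ratio p q) ^ k * X ((2 * p + q) * Z.of_nat k)%Z
  / ((INR k) ^ 2 * binom (3 * k) k).

(* Let f(x) = sum_{k >= 1} x^k / (k^2 C(3k,k)).  The n-th coefficient of f' is
   1 / ((n+1) C(3n+3,n+1)) = B(n+1, 2n+3) = int_0^1 t^n (1-t)^(2n+2) dt, so summing a geometric
   series under the integral, f'(x) = int_0^1 (1-t)^2 / (1 - x t (1-t)^2) dt for |x| < 27/4.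
   Along x(s) = -27 s^3 / (1-s^3)^2 the denominator splits into a linear and a quadratic factor
   in t, the integral is elementary, and integrating back in s gives
     f(x(s)) = 6 theta(s)^2 - lambda(s)^2 / 2   for -1 < s < 1/2,
   with theta(s) = atan (sqrt 3 s / (2 + s)) and lambda(s) = ln ((1 + s + s^2) / (1 - s)^2).
   By Binet's formulas the two series of the theorem are (f(r alpha^m) - f(r beta^m)) / sqrt 5 and
   f(r alpha^m) + f(r beta^m), with r the common ratio and m = 2p + q.  Both points are of the
   form x(s), for s the ratio of real cube roots with s^3 = F_(p+q) / (alpha^q F_p), resp.
   s^3 = (-1)^q F_p / (alpha^q F_(p+q)), and for these s the values theta(s), lambda(s) are the
   arctangents and logarithms of the statement. *)

From Stdlib Require Import Reals ZArith Lra Lia.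
From Coquelicot Require Import Coquelicot.
Open Scope R_scope.

Lemma continuous_of_ex_derive (f : R -> R) (x : R) : ex_derive f x -> continuous f x.
Proof. apply (ex_derive_continuous (V := R_NormedModule)). Qed.

Lemma scal_R (a b : R) : scal a b = a * b.
Proof. reflexivity. Qed.

Lemma plus_R (a b : R) : plus a b = a + b.
Proof. reflexivity. Qed.

(* Equations between values in Coquelicot's generic lemmas live in the carrier of a normed
   module, where [ring] and [field] fail; these variants state them at type [R]. *)
Lemma is_RInt_ext_R (f g : R -> R) (a b l l' : R) :
  (forall t, f t = g t) -> l = l' -> is_RInt f a b l -> is_RInt g a b l'.
Proof. intros E <-. apply is_RInt_ext. intros t _. apply E. Qed.

Lemma is_derive_val (f : R -> R) (x l l' : R) : is_derive f x l -> l = l' -> is_derive f x l'.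
Proof. now intros H <-. Qed.

Lemma is_series_ext_R (a b : nat -> R) (l l' : R) :
  (forall n, a n = b n) -> l = l' -> is_series a l -> is_series b l'.
Proof. intros E <-. apply is_series_ext, E. Qed.

(** * Beta integrals *)

Lemma is_derive_primitive_one_minus_pow (n : nat) (t : R) :
  is_derive (fun t => - (1 - t) ^ S n / INR (S n)) t ((1 - t) ^ n).
Proof.
  assert (0 < INR (S n)) by (apply lt_0_INR; lia).
  auto_derive; [lra|].
  change (match n with 0%nat => 1 | S _ => INR n + 1 end) with (INR (S n)).
  replace (1 + - t) with (1 - t) by ring.
  field. lra.
Qed.

Lemma is_RInt_one_minus_pow (n : nat) :
  is_RInt (fun t => (1 - t) ^ n) 0 1 (/ INR (S n)).
Proof.
  set (F := fun t => - (1 - t) ^ S n / INR (S n)).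
  replace (/ INR (S n)) with (F 1 - F 0).
  - apply (is_RInt_derive F).
    + intros t _. apply is_derive_primitive_one_minus_pow.
    + intros t _. apply continuous_of_ex_derive. auto_derive. easy.
  - assert (0 < INR (S n)) by (apply lt_0_INR; lia).
    unfold F. rewrite Rminus_diag, Rminus_0_r, pow_ne_zero, pow1 by lia. field. lra.
Qed.

Lemma is_RInt_beta_step (m n : nat) (I : R) :
  is_RInt (fun t => t ^ m * (1 - t) ^ S n) 0 1 I ->
  is_RInt (fun t => t ^ S m * (1 - t) ^ n) 0 1 (INR (S m) / INR (S n) * I).
Proof.
  intros HI.
  assert (0 < INR (S n)) by (apply lt_0_INR; lia).
  set (G := fun t => - (1 - t) ^ S n / INR (S n)).
  assert (HG : is_RInt (fun t => INR (S m) * t ^ m * G t) 0 1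
                 (- (INR (S m) / INR (S n)) * I)).
  { apply (is_RInt_ext_R (fun t => - (INR (S m) / INR (S n)) * (t ^ m * (1 - t) ^ S n))
           _ _ _ (- (INR (S m) / INR (S n)) * I)).
    - intros t. unfold G. field. lra.
    - reflexivity.
    - now apply (is_RInt_scal (V := R_CompleteNormedModule)). }
  apply (is_RInt_scal_derive_r (fun t => t ^ S m) G (fun t => INR (S m) * t ^ m)
           (fun t => (1 - t) ^ n)) in HG.
  - refine (is_RInt_ext_R _ _ _ _ _ _ (fun t => eq_refl) _ HG).
    unfold G. repeat change (minus ?a ?b) with (a - b). repeat change (scal ?a ?b) with (a * b).
    rewrite Rminus_diag, Rminus_0_r, !pow1, !pow_i by lia. field. lra.
  - intros t _. auto_derive; [easy |].
    change (match m with 0%nat => 1 | S _ => INR m + 1 end) with (INR (S m)). ring.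
  - intros t _. apply is_derive_primitive_one_minus_pow.
  - intros t _. apply continuous_of_ex_derive. auto_derive. easy.
  - intros t _. apply continuous_of_ex_derive. auto_derive. easy.
Qed.

Lemma INR_fact_pos (n : nat) : 0 < INR (fact n).
Proof. apply lt_0_INR, lt_O_fact. Qed.

Lemma is_RInt_beta (m n : nat) :
  is_RInt (fun t => t ^ m * (1 - t) ^ n) 0 1
    (INR (fact m) * INR (fact n) / INR (fact (m + n + 1))).
Proof.
  revert n; induction m as [|m IH]; intros n.
  - apply (is_RInt_ext_R (fun t => (1 - t) ^ n) _ 0 1 (/ INR (S n))).
    + intros t. simpl. ring.
    + replace (0 + n + 1)%nat with (S n) by lia.
      rewrite fact_simpl, mult_INR. simpl (INR (fact 0)).
      pose proof (INR_fact_pos n). field. split; [lra | apply not_0_INR; lia].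
    + apply is_RInt_one_minus_pow.
  - refine (is_RInt_ext_R _ _ 0 1 _ _ (fun t => eq_refl) _ (is_RInt_beta_step m n _ (IH (S n)))).
    replace (m + S n + 1)%nat with (S m + n + 1)%nat by lia.
    rewrite !fact_simpl, !mult_INR.
    pose proof (INR_fact_pos n). pose proof (INR_fact_pos (S m + n + 1)).
    assert (0 < INR (S n)) by (apply lt_0_INR; lia).
    field. lra.
Qed.

(** * The power series of [1 / (k^2 C(3k,k))] *)

(* At [k = 0] this is [/ 0], which is [0] in Rocq, so [PSeries binom3_coef] is the sum over
   [k >= 1]. *)
Definition binom3_coef (k : nat) : R := / (INR k ^ 2 * binom (3 * k) k).

Lemma binom3_coef_0 : binom3_coef 0 = 0.
Proof.
  unfold binom3_coef. replace (INR 0 ^ 2 * binom (3 * 0) 0) with 0 by (simpl; ring).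
  apply Rinv_0.
Qed.

Lemma is_RInt_PS_derive_binom3_coef (n : nat) :
  is_RInt (fun t => t ^ n * (1 - t) ^ (2 * n + 2)) 0 1 (PS_derive binom3_coef n).
Proof.
  replace (PS_derive binom3_coef n)
    with (INR (fact n) * INR (fact (2 * n + 2)) / INR (fact (n + (2 * n + 2) + 1))).
  { apply is_RInt_beta. }
  unfold PS_derive, binom3_coef, binom, Binomial.C.
  replace (3 * S n - S n)%nat with (2 * n + 2)%nat by lia.
  replace (n + (2 * n + 2) + 1)%nat with (3 * S n)%nat by lia.
  rewrite fact_simpl, mult_INR.
  pose proof (INR_fact_pos n). pose proof (INR_fact_pos (2 * n + 2)).
  pose proof (INR_fact_pos (3 * S n)).
  assert (INR (S n) <> 0) by (apply not_0_INR; lia).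
  field. repeat split; lra.
Qed.

Lemma cubic_bound (t : R) : 0 <= t <= 1 -> 0 <= t * (1 - t) ^ 2 <= 4 / 27.
Proof.
  intros Ht. split.
  - apply Rmult_le_pos; [lra | apply pow2_ge_0].
  - (* 4/27 - t(1-t)^2 = (1-3t)^2 (4-3t)/27 *)
    assert (0 <= (1 - 3 * t) ^ 2 * (4 - 3 * t)) by (apply Rmult_le_pos; [apply pow2_ge_0 | lra]).
    nra.
Qed.

Lemma PS_derive_binom3_coef_bound (n : nat) : 0 <= PS_derive binom3_coef n <= (4 / 27) ^ n.
Proof.
  split.
  - apply (is_RInt_ge_0 _ 0 1 _ Rle_0_1 (is_RInt_PS_derive_binom3_coef n)).
    intros t Ht. apply Rmult_le_pos; apply pow_le; lra.
  - apply Rle_trans with (scal (1 - 0) ((4 / 27) ^ n)); [ | rewrite scal_R; lra].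
    apply (is_RInt_le _ _ 0 1 _ _ Rle_0_1 (is_RInt_PS_derive_binom3_coef n)
              (is_RInt_const 0 1 ((4 / 27) ^ n))).
    intros t Ht.
    replace (t ^ n * (1 - t) ^ (2 * n + 2)) with ((t * (1 - t) ^ 2) ^ n * (1 - t) ^ 2)
      by (rewrite Rpow_mult_distr, <- pow_mult, Rmult_assoc, <- pow_add;
          f_equal; f_equal; lia).
    pose proof (cubic_bound t ltac:(lra)).
    assert ((t * (1 - t) ^ 2) ^ n <= (4 / 27) ^ n) by (apply pow_incr; lra).
    assert (0 <= (t * (1 - t) ^ 2) ^ n) by (apply pow_le; lra).
    assert (0 <= (1 - t) ^ 2 <= 1) by (split; [apply pow2_ge_0 | nra]).
    nra.
Qed.

Lemma CV_radius_binom3_coef : Rbar_le (27 / 4) (CV_radius binom3_coef).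
Proof.
  rewrite <- CV_radius_derive.
  apply (proj1 (CV_radius_bounded _)). exists 1. intros n.
  pose proof (PS_derive_binom3_coef_bound n).
  rewrite Rabs_mult, <- RPow_abs, !Rabs_right by lra.
  apply Rle_trans with ((4 / 27) ^ n * (27 / 4) ^ n).
  - apply Rmult_le_compat_r; [apply pow_le | ]; lra.
  - rewrite <- Rpow_mult_distr. replace (4 / 27 * (27 / 4)) with 1 by field.
    rewrite pow1. lra.
Qed.

Lemma is_RInt_sum_n (f : nat -> R -> R) (I : nat -> R) (a b : R) (N : nat) :
  (forall n, is_RInt (f n) a b (I n)) ->
  is_RInt (fun t => sum_n (fun n => f n t) N) a b (sum_n I N).
Proof.
  intros HI. induction N as [|N IH].
  - apply (is_RInt_ext_R (f 0%nat) _ a b (I 0%nat)).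
    + intros t. now rewrite sum_O.
    + now rewrite sum_O.
    + apply HI.
  - apply (is_RInt_ext_R (fun t => sum_n (fun n => f n t) N + f (S N) t) _ a b
             (sum_n I N + I (S N))).
    + intros t. now rewrite sum_Sn.
    + now rewrite sum_Sn.
    + now apply (is_RInt_plus (V := R_CompleteNormedModule)).
Qed.

Lemma is_lim_seq_geometric_error (u : nat -> R) (l C rho : R) :
  0 <= rho < 1 -> (forall N, Rabs (l - u N) <= C * rho ^ N) -> is_lim_seq u l.
Proof.
  intros Hrho Hu.
  apply is_lim_seq_ext with (fun N => l - (l - u N)); [intros N; ring |].
  replace (Finite l) with (Finite (l - 0)) by (f_equal; ring).
  apply is_lim_seq_minus'; [apply is_lim_seq_const |].
  apply is_lim_seq_abs_0.
  apply is_lim_seq_le_le with (fun _ => 0) (fun N => C * rho ^ N).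
  - intros N. split; [apply Rabs_pos | apply Hu].
  - apply is_lim_seq_const.
  - replace (Finite 0) with (Rbar_mult C 0) by (simpl; f_equal; ring).
    apply is_lim_seq_scal_l, is_lim_seq_geom. rewrite Rabs_right; lra.
Qed.

Definition kernel (x t : R) : R := (1 - t) ^ 2 / (1 - x * t * (1 - t) ^ 2).

Lemma is_RInt_PS_derive_term (x : R) (n : nat) :
  is_RInt (fun t => (1 - t) ^ 2 * (x * t * (1 - t) ^ 2) ^ n) 0 1
    (PS_derive binom3_coef n * x ^ n).
Proof.
  apply (is_RInt_ext_R (fun t => x ^ n * (t ^ n * (1 - t) ^ (2 * n + 2))) _ 0 1
           (x ^ n * PS_derive binom3_coef n)).
  - intros t. rewrite !Rpow_mult_distr, <- pow_mult, Nat.add_comm, pow_add. ring.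
  - ring.
  - apply (is_RInt_scal (V := R_CompleteNormedModule)), is_RInt_PS_derive_binom3_coef.
Qed.

Lemma geom_remainder (c w : R) (N : nat) : w <> 1 ->
  c / (1 - w) - sum_n (fun n => c * w ^ n) N = c * w ^ S N / (1 - w).
Proof.
  intros Hw. assert (1 - w <> 0) by lra.
  induction N as [|N IH].
  - rewrite sum_O. field. auto.
  - rewrite sum_Sn, plus_R.
    replace (c / (1 - w) - (sum_n (fun n => c * w ^ n) N + c * w ^ S N))
      with ((c / (1 - w) - sum_n (fun n => c * w ^ n) N) - c * w ^ S N) by ring.
    rewrite IH. simpl. field. auto.
Qed.

Lemma kernel_arg_bound (x t : R) : 0 <= t <= 1 ->
  Rabs (x * t * (1 - t) ^ 2) <= Rabs x * (4 / 27).
Proof.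
  intros Ht. pose proof (cubic_bound t Ht).
  rewrite Rmult_assoc, Rabs_mult, (Rabs_right (t * _)) by lra.
  apply Rmult_le_compat_l; [apply Rabs_pos | lra].
Qed.

Lemma kernel_remainder_bound (x t : R) (N : nat) :
  Rabs x < 27 / 4 -> 0 <= t <= 1 ->
  Rabs (kernel x t - sum_n (fun n => (1 - t) ^ 2 * (x * t * (1 - t) ^ 2) ^ n) N)
    <= / (1 - Rabs x * (4 / 27)) * (Rabs x * (4 / 27)) ^ S N.
Proof.
  intros Hx Ht.
  pose proof (kernel_arg_bound x t Ht) as Hw.
  set (w := x * t * (1 - t) ^ 2) in *. set (rho := Rabs x * (4 / 27)) in *.
  pose proof (Rabs_pos w). apply Rabs_le_between in Hw as Hw'.
  assert (rho < 1) by (unfold rho; lra).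
  unfold kernel. fold w. rewrite geom_remainder by lra.
  rewrite Rabs_div by lra. rewrite Rabs_mult, <- !RPow_abs, pow2_abs, (Rabs_right (1 - w)) by lra.
  assert (0 <= (1 - t) ^ 2 <= 1) by (split; [apply pow2_ge_0 | nra]).
  assert (Rabs w ^ S N <= rho ^ S N) by (apply pow_incr; lra).
  assert (0 <= Rabs w ^ S N) by (apply pow_le; lra).
  unfold Rdiv. rewrite Rmult_comm. apply Rmult_le_compat.
  - apply Rlt_le, Rinv_0_lt_compat; lra.
  - apply Rmult_le_pos; lra.
  - apply Rinv_le_contravar; lra.
  - nra.
Qed.

Lemma is_series_PS_derive_binom3_coef (x : R) : Rabs x < 27 / 4 ->
  is_series (fun n => PS_derive binom3_coef n * x ^ n) (RInt (kernel x) 0 1).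
Proof.
  intros Hx.
  set (rho := Rabs x * (4 / 27)). pose proof (Rabs_pos x).
  assert (Hden : forall t, 0 <= t <= 1 -> 0 < 1 - x * t * (1 - t) ^ 2).
  { intros t Ht. pose proof (kernel_arg_bound x t Ht) as Hw.
    apply Rabs_le_between in Hw. lra. }
  assert (Hex : ex_RInt (kernel x) 0 1).
  { apply (ex_RInt_continuous (V := R_CompleteNormedModule)). intros t Ht.
    rewrite Rmin_left, Rmax_right in Ht by lra.
    apply continuous_of_ex_derive. unfold kernel. auto_derive. specialize (Hden t Ht). lra. }
  apply (is_lim_seq_geometric_error _ _ (/ (1 - rho) * rho) rho); [unfold rho; lra |].
  intros N.
  replace (/ (1 - rho) * rho * rho ^ N) with ((1 - 0) * (/ (1 - rho) * rho ^ S N))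
    by (simpl; ring).
  pose proof (is_RInt_minus (V := R_NormedModule) _ _ 0 1 _ _
                (RInt_correct (V := R_CompleteNormedModule) _ _ _ Hex)
                (is_RInt_sum_n _ _ 0 1 N (is_RInt_PS_derive_term x))) as HI.
  refine (norm_RInt_le_const _ 0 1 _ _ Rle_0_1 _ HI).
  intros t Ht. apply kernel_remainder_bound; assumption.
Qed.

(** * The closed form along [x_of] *)

Lemma eq_of_is_derive (f g df : R -> R) (a b x0 x : R) :
  a < x0 < b -> a < x < b ->
  (forall y, a < y < b -> is_derive f y (df y)) ->
  (forall y, a < y < b -> is_derive g y (df y)) ->
  f x0 = g x0 -> f x = g x.
Proof.
  intros Hx0 Hx Hf Hg E.
  assert (Hin : forall y, Rmin x0 x <= y <= Rmax x0 x -> a < y < b).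
  { intros y Hy. assert (a < Rmin x0 x) by (apply Rmin_glb_lt; lra).
    assert (Rmax x0 x < b) by (apply Rmax_lub_lt; lra). lra. }
  assert (Hh : forall y, a < y < b -> is_derive (fun y => f y - g y) y 0).
  { intros y Hy. replace 0 with (df y - df y) by ring.
    apply (is_derive_minus f g); auto. }
  destruct (MVT_gen (fun y => f y - g y) x0 x (fun _ => 0)) as [c [_ Hc]].
  - intros y Hy. apply Hh, Hin. lra.
  - intros y Hy. apply continuity_pt_filterlim, (continuous_of_ex_derive (fun y => f y - g y)).
    exists 0. apply Hh, Hin, Hy.
  - lra.
Qed.

Lemma sqrt3_sqr : sqrt 3 * sqrt 3 = 3.
Proof. apply sqrt_sqrt. lra. Qed.

Lemma sqrt3_pos : 0 < sqrt 3.
Proof. apply sqrt_lt_R0. lra. Qed.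

(* The shapes in which [auto_derive] returns [1 + u ^ 2] for the derivative of [atan u]. *)
Lemma one_plus_sqr_div_sqrt3 (a K : R) : K <> 0 ->
  1 + a * / (sqrt 3 * K) * (a * / (sqrt 3 * K) * 1) = (3 * K ^ 2 + a ^ 2) / (3 * K ^ 2).
Proof.
  intros HK. pose proof sqrt3_pos.
  replace (a * / (sqrt 3 * K) * (a * / (sqrt 3 * K) * 1))
    with (a ^ 2 / ((sqrt 3 * sqrt 3) * K ^ 2)) by (field; lra).
  rewrite sqrt3_sqr. field. auto.
Qed.

Lemma one_plus_sqr_sqrt3_div (a b : R) : b <> 0 ->
  1 + sqrt 3 * a * / b * (sqrt 3 * a * / b * 1) = (b ^ 2 + 3 * a ^ 2) / b ^ 2.
Proof.
  intros Hb.
  replace (1 + sqrt 3 * a * / b * (sqrt 3 * a * / b * 1))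
    with (1 + (sqrt 3 * sqrt 3) * a ^ 2 / b ^ 2) by (field; auto).
  rewrite sqrt3_sqr. field. auto.
Qed.

Lemma cube_lt_cube (a b : R) : a < b <-> a ^ 3 < b ^ 3.
Proof.
  assert (Hmono : forall a b, a < b -> a ^ 3 < b ^ 3).
  { intros u v Huv.
    assert (E : v ^ 3 - u ^ 3 = (v - u) * ((u + v / 2) ^ 2 + 3 / 4 * v ^ 2)) by field.
    assert (0 < (u + v / 2) ^ 2 + 3 / 4 * v ^ 2).
    { destruct (Req_dec v 0) as [-> | Hv].
      - replace (u + 0 / 2) with u by field. assert (0 < u ^ 2) by (apply pow2_gt_0; lra). lra.
      - pose proof (pow2_gt_0 v Hv). pose proof (pow2_ge_0 (u + v / 2)). lra. }
    nra. }
  split; [apply Hmono |].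
  intros H. destruct (Rlt_or_le a b) as [| [Hba | ->]]; auto.
  - apply Hmono in Hba. lra.
  - lra.
Qed.

Lemma cube_bounds (s : R) : -1 < s < 1 / 2 <-> -1 < s ^ 3 < 1 / 8.
Proof.
  rewrite (cube_lt_cube (-1) s), (cube_lt_cube s (1 / 2)).
  replace ((-1) ^ 3) with (-1) by ring. replace ((1 / 2) ^ 3) with (1 / 8) by field.
  tauto.
Qed.

Lemma cube_lt_1 (s : R) : s < 1 -> s ^ 3 < 1.
Proof. intros Hs. apply cube_lt_cube in Hs. now rewrite pow1 in Hs. Qed.

Definition x_of (s : R) : R := -27 * s ^ 3 / (1 - s ^ 3) ^ 2.
Definition theta_of (s : R) : R := atan (sqrt 3 * s / (2 + s)).
Definition lambda_of (s : R) : R := ln ((1 + s + s ^ 2) / (1 - s) ^ 2).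

Lemma is_derive_theta_of (s : R) : -1 < s < 1 ->
  is_derive theta_of s (sqrt 3 / (2 * (1 + s + s ^ 2))).
Proof.
  intros Hs. pose proof sqrt3_pos.
  assert (0 < 1 + s + s ^ 2) by nra.
  unfold theta_of. auto_derive; [lra |].
  rewrite one_plus_sqr_sqrt3_div by lra. field. lra.
Qed.

Lemma is_derive_atan_div_sqrt3 (N D : R -> R) (s dN dD : R) :
  is_derive N s dN -> is_derive D s dD -> D s <> 0 ->
  is_derive (fun y => atan (N y / (sqrt 3 * D y))) s
    (sqrt 3 * (dN * D s - N s * dD) / (3 * D s ^ 2 + N s ^ 2)).
Proof.
  intros HN HD HD0. pose proof sqrt3_pos.
  assert (0 < 3 * D s ^ 2 + N s ^ 2)
    by (pose proof (pow2_ge_0 (N s)); pose proof (pow2_gt_0 (D s) HD0); lra).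
  assert (Hu := is_derive_div N (fun y => sqrt 3 * D y) s dN (sqrt 3 * dD) HN
                  (is_derive_scal D s (sqrt 3) dD HD)
                  (Rmult_integral_contrapositive_currified _ _ (Rgt_not_eq _ _ H) HD0)).
  apply (is_derive_val _ _ _ _ (is_derive_comp atan _ s _ _ (is_derive_atan _) Hu)).
  change (scal ?a ?b) with (a * b). unfold Rsqr.
  set (r := sqrt 3) in *. assert (Hr : 3 = r * r) by (symmetry; apply sqrt3_sqr).
  rewrite Hr in H0 |- *. field. repeat split; lra.
Qed.

Lemma atan_triple_identity (s : R) : -1 < s < 1 ->
  atan ((1 + 4 * s + s ^ 2) / (sqrt 3 * (1 - s ^ 2))) - atan ((1 - s) / (sqrt 3 * (1 + s)))
  = 3 * theta_of s.
Proof.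
  intros Hs. pose proof sqrt3_pos.
  apply (eq_of_is_derive
           (fun s => atan ((1 + 4 * s + s ^ 2) / (sqrt 3 * (1 - s ^ 2)))
                     - atan ((1 - s) / (sqrt 3 * (1 + s))))
           (fun s => 3 * theta_of s) (fun s => 3 * (sqrt 3 / (2 * (1 + s + s ^ 2))))
           (-1) 1 0 s); [lra | exact Hs | | | ].
  - intros y Hy. assert (0 < 1 + y + y ^ 2) by nra.
    assert (H1 := is_derive_atan_div_sqrt3 (fun y => 1 + 4 * y + y ^ 2) (fun y => 1 - y ^ 2)
                    y (4 + 2 * y) (- 2 * y)
                    ltac:(auto_derive; [easy | ring]) ltac:(auto_derive; [easy | ring])
                    ltac:(cbv beta; nra)).
    assert (H2 := is_derive_atan_div_sqrt3 (fun y => 1 - y) (fun y => 1 + y) y (-1) 1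
                    ltac:(auto_derive; [easy | ring]) ltac:(auto_derive; [easy | ring])
                    ltac:(cbv beta; lra)).
    apply (is_derive_val _ _ _ _ (is_derive_minus _ _ y _ _ H1 H2)).
    change (minus ?a ?b) with (a - b).
    field. repeat split; nra.
  - intros y Hy. apply (is_derive_scal theta_of), is_derive_theta_of, Hy.
  - unfold theta_of. replace (sqrt 3 * 0 / (2 + 0)) with 0 by field. rewrite atan_0.
    replace ((1 + 4 * 0 + 0 ^ 2) / (sqrt 3 * (1 - 0 ^ 2))) with ((1 - 0) / (sqrt 3 * (1 + 0)))
      by (field; lra).
    ring.
Qed.

Definition lin_factor (s t : R) : R := (1 - s) ^ 2 + 3 * s * t.

Definition quad_factor (s t : R) : R :=
  9 * s ^ 2 * t ^ 2 - 3 * s * (1 + 4 * s + s ^ 2) * t + (1 + s + s ^ 2) ^ 2.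

Lemma kernel_denominator_factor (s t : R) : 1 - s ^ 3 <> 0 ->
  1 - x_of s * t * (1 - t) ^ 2 = lin_factor s t * quad_factor s t / (1 - s ^ 3) ^ 2.
Proof. intros H. unfold x_of, lin_factor, quad_factor. field. auto. Qed.

Lemma lin_factor_pos (s t : R) : -1 < s < 1 -> 0 <= t <= 1 -> 0 < lin_factor s t.
Proof.
  intros Hs Ht. unfold lin_factor.
  replace ((1 - s) ^ 2 + 3 * s * t) with ((1 - t) * (1 - s) ^ 2 + t * (1 + s + s ^ 2)) by ring.
  assert (0 < (1 - s) ^ 2) by (apply pow_lt; lra).
  assert (0 < 1 + s + s ^ 2) by nra.
  assert (0 <= (1 - t) * (1 - s) ^ 2) by (apply Rmult_le_pos; lra).
  assert (0 <= t * (1 + s + s ^ 2)) by (apply Rmult_le_pos; lra).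
  destruct (Req_dec t 0) as [-> | Ht0]; [lra |].
  assert (0 < t * (1 + s + s ^ 2)) by (apply Rmult_lt_0_compat; lra).
  lra.
Qed.

Lemma quad_factor_square (s t : R) :
  4 * quad_factor s t = (6 * s * t - 1 - 4 * s - s ^ 2) ^ 2 + 3 * (1 - s ^ 2) ^ 2.
Proof. unfold quad_factor. ring. Qed.

Lemma quad_factor_pos (s t : R) : -1 < s < 1 -> 0 < quad_factor s t.
Proof.
  intros Hs. pose proof (quad_factor_square s t).
  assert (0 < (1 - s ^ 2) ^ 2) by (apply pow_lt; nra).
  pose proof (pow2_ge_0 (6 * s * t - 1 - 4 * s - s ^ 2)). lra.
Qed.

Lemma kernel_x_of (s t : R) : -1 < s < 1 -> 0 <= t <= 1 ->
  kernel (x_of s) t = (1 - t) ^ 2 * (1 - s ^ 3) ^ 2 / (lin_factor s t * quad_factor s t).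
Proof.
  intros Hs Ht. pose proof (cube_lt_1 s ltac:(lra)).
  pose proof (lin_factor_pos s t Hs Ht). pose proof (quad_factor_pos s t Hs).
  unfold kernel. rewrite kernel_denominator_factor by lra.
  field. repeat split; lra.
Qed.

(* An antiderivative of [kernel (x_of s)] in [t], read off from its partial fractions over
   [lin_factor s t * quad_factor s t]; the coefficients are meaningless at [s = 0]. *)
Definition antideriv (s t : R) : R :=
  (1 - s ^ 3) ^ 2 * (1 + s + s ^ 2) / (81 * s ^ 3 * (1 - s + s ^ 2)) * ln (lin_factor s t)
  + (1 - s ^ 3) ^ 2 * (1 - s) ^ 2 / (81 * s ^ 3 * (1 - s + s ^ 2)) * ln (quad_factor s t)
  - 2 * sqrt 3 * (1 - s) ^ 3 * (1 + s + s ^ 2) ^ 2 / (81 * s ^ 2 * (1 + s) * (1 - s + s ^ 2))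
    * atan ((6 * s * t - 1 - 4 * s - s ^ 2) / (sqrt 3 * (1 - s ^ 2))).

Lemma is_derive_antideriv (s t : R) : -1 < s < 1 -> s <> 0 -> 0 <= t <= 1 ->
  is_derive (antideriv s) t (kernel (x_of s) t).
Proof.
  intros Hs Hs0 Ht.
  rewrite kernel_x_of by auto.
  pose proof (lin_factor_pos s t Hs Ht). pose proof (quad_factor_pos s t Hs).
  pose proof (cube_lt_1 s ltac:(lra)). pose proof sqrt3_pos.
  assert (K : 1 - s * (s * 1) <> 0) by nra.
  assert (1 - s + s ^ 2 <> 0) by nra.
  unfold antideriv, lin_factor, quad_factor in *. auto_derive; [repeat split; lra |].
  rewrite one_plus_sqr_div_sqrt3 by exact K.
  field. repeat split; try lra; nra.
Qed.

Lemma is_RInt_kernel_x_of (s : R) : -1 < s < 1 -> s <> 0 ->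
  is_RInt (kernel (x_of s)) 0 1
  (- (1 - s) ^ 2 * (1 + s + s ^ 2) ^ 2
    * (2 * sqrt 3 * (1 - s) * theta_of s - (1 + s) * lambda_of s)
    / (27 * s ^ 2 * (1 + s) * (1 - s + s ^ 2))).
Proof.
  intros Hs Hs0.
  assert (HI : is_RInt (kernel (x_of s)) 0 1 (antideriv s 1 - antideriv s 0)).
  { apply (is_RInt_derive (V := R_CompleteNormedModule)); intros t Ht;
      rewrite Rmin_left, Rmax_right in Ht by lra.
    - now apply is_derive_antideriv.
    - pose proof (lin_factor_pos s t Hs Ht). pose proof (quad_factor_pos s t Hs).
      pose proof (cube_lt_1 s ltac:(lra)).
      assert (0 < 1 - x_of s * t * (1 - t) ^ 2).
      { rewrite kernel_denominator_factor by lra.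
        apply Rdiv_lt_0_compat; [nra | apply pow_lt; lra]. }
      apply continuous_of_ex_derive. unfold kernel. auto_derive. lra. }
  refine (is_RInt_ext_R _ _ 0 1 _ _ (fun t => eq_refl) _ HI).
  pose proof sqrt3_pos.
  assert (0 < 1 + s + s ^ 2) by nra. assert (0 < (1 - s) ^ 2) by (apply pow_lt; lra).
  unfold antideriv.
  replace (lin_factor s 1) with (1 + s + s ^ 2) by (unfold lin_factor; ring).
  replace (lin_factor s 0) with ((1 - s) ^ 2) by (unfold lin_factor; ring).
  replace (quad_factor s 1) with ((1 - s) ^ 2 * (1 + s + s ^ 2)) by (unfold quad_factor; ring).
  replace (quad_factor s 0) with ((1 + s + s ^ 2) * (1 + s + s ^ 2)) by (unfold quad_factor; ring).
  replace ((6 * s * 1 - 1 - 4 * s - s ^ 2) / (sqrt 3 * (1 - s ^ 2)))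
    with (- ((1 - s) / (sqrt 3 * (1 + s)))) by (field; split; nra).
  replace ((6 * s * 0 - 1 - 4 * s - s ^ 2) / (sqrt 3 * (1 - s ^ 2)))
    with (- ((1 + 4 * s + s ^ 2) / (sqrt 3 * (1 - s ^ 2)))) by (field; split; nra).
  rewrite !atan_opp, !ln_mult by lra.
  pose proof (atan_triple_identity s Hs) as E.
  unfold lambda_of. rewrite ln_div by lra.
  set (A1 := atan ((1 - s) / (sqrt 3 * (1 + s)))) in *.
  set (A0 := atan ((1 + 4 * s + s ^ 2) / (sqrt 3 * (1 - s ^ 2)))) in *.
  replace A0 with (3 * theta_of s + A1) by lra.
  field. repeat split; try lra; nra.
Qed.

Lemma x_of_bound (s : R) : -1 < s < 1 / 2 -> Rabs (x_of s) < 27 / 4.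
Proof.
  intros Hs. apply cube_bounds in Hs. unfold x_of.
  set (y := s ^ 3) in *.
  assert (0 < (1 - y) ^ 2) by (apply pow_lt; lra).
  rewrite Rabs_div, Rabs_mult, (Rabs_right ((1 - y) ^ 2)), (Rabs_left (-27)) by lra.
  apply (Rmult_lt_reg_r ((1 - y) ^ 2)); [lra |].
  unfold Rdiv. rewrite Rmult_assoc, Rinv_l, Rmult_1_r by lra.
  destruct (Rle_dec 0 y).
  - rewrite Rabs_right by lra. nra.
  - rewrite Rabs_left by lra. nra.
Qed.

Definition closed_form (s : R) : R := 6 * theta_of s ^ 2 - 1 / 2 * lambda_of s ^ 2.

Lemma is_derive_x_of (s : R) : -1 < s < 1 ->
  is_derive x_of s (-81 * s ^ 2 * (1 + s ^ 3) / (1 - s ^ 3) ^ 3).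
Proof.
  intros Hs. pose proof (cube_lt_1 s ltac:(lra)).
  unfold x_of. auto_derive; [nra |]. field. lra.
Qed.

Lemma is_derive_lambda_of (s : R) : -1 < s < 1 ->
  is_derive lambda_of s (3 * (1 + s) / ((1 - s) * (1 + s + s ^ 2))).
Proof.
  intros Hs. assert (0 < 1 + s + s ^ 2) by nra.
  assert (0 < (1 - s) ^ 2) by (apply pow_lt; lra).
  unfold lambda_of. auto_derive.
  - repeat split; [lra | apply Rdiv_lt_0_compat; lra].
  - field. repeat split; lra.
Qed.

Definition closed_form_deriv (s : R) : R :=
  6 * sqrt 3 * theta_of s / (1 + s + s ^ 2)
  - 3 * (1 + s) * lambda_of s / ((1 - s) * (1 + s + s ^ 2)).

Lemma is_derive_closed_form (s : R) : -1 < s < 1 ->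
  is_derive closed_form s (closed_form_deriv s).
Proof.
  intros Hs. assert (0 < 1 + s + s ^ 2) by nra.
  apply (is_derive_val _ _ _ _
           (is_derive_minus _ _ s _ _
              (is_derive_scal _ s 6 _ (is_derive_pow _ 2 s _ (is_derive_theta_of s Hs)))
              (is_derive_scal _ s (1 / 2) _ (is_derive_pow _ 2 s _ (is_derive_lambda_of s Hs))))).
  unfold closed_form_deriv. change (minus ?a ?b) with (a - b). simpl. field. lra.
Qed.

Lemma theta_of_0 : theta_of 0 = 0.
Proof. unfold theta_of. replace (sqrt 3 * 0 / (2 + 0)) with 0 by field. apply atan_0. Qed.

Lemma lambda_of_0 : lambda_of 0 = 0.
Proof. unfold lambda_of. replace ((1 + 0 + 0 ^ 2) / (1 - 0) ^ 2) with 1 by field. apply ln_1. Qed.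

Lemma chain_rule_PSeries_x_of (s : R) : -1 < s < 1 / 2 ->
  -81 * s ^ 2 * (1 + s ^ 3) / (1 - s ^ 3) ^ 3 * PSeries (PS_derive binom3_coef) (x_of s)
  = closed_form_deriv s.
Proof.
  intros Hs. unfold closed_form_deriv.
  destruct (Req_dec s 0) as [-> | Hs0].
  { rewrite theta_of_0, lambda_of_0. field. }
  rewrite (is_pseries_unique _ _ _ (proj2 (is_pseries_R _ _ _)
             (is_series_PS_derive_binom3_coef _ (x_of_bound s Hs)))).
  rewrite (is_RInt_unique _ _ _ _ (is_RInt_kernel_x_of s ltac:(lra) Hs0)).
  pose proof (cube_lt_1 s ltac:(lra)). pose proof sqrt3_pos.
  assert (0 < 1 + s + s ^ 2) by nra.
  field. repeat split; try lra; nra.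
Qed.

Lemma PSeries_binom3_coef_x_of (s : R) : -1 < s < 1 / 2 ->
  PSeries binom3_coef (x_of s) = closed_form s.
Proof.
  intros Hs.
  apply (eq_of_is_derive (fun s => PSeries binom3_coef (x_of s)) closed_form closed_form_deriv
           (-1) (1 / 2) 0 s); [lra | exact Hs | | | ].
  - intros y Hy. rewrite <- chain_rule_PSeries_x_of by exact Hy.
    apply (is_derive_comp (PSeries binom3_coef) x_of).
    + apply is_derive_PSeries.
      apply (Rbar_lt_le_trans _ (27 / 4)); [apply x_of_bound, Hy | apply CV_radius_binom3_coef].
    + apply is_derive_x_of. lra.
  - intros y Hy. apply is_derive_closed_form. lra.
  - replace (x_of 0) with 0 by (unfold x_of; field).
    rewrite PSeries_0, binom3_coef_0. unfold closed_form.
    rewrite theta_of_0, lambda_of_0. ring.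
Qed.

Lemma is_series_binom3_coef_x_of (s : R) : -1 < s < 1 / 2 ->
  is_series (fun n => binom3_coef (S n) * x_of s ^ S n) (closed_form s).
Proof.
  intros Hs.
  assert (Hcv : ex_pseries binom3_coef (x_of s)).
  { apply CV_radius_inside.
    apply (Rbar_lt_le_trans _ (27 / 4)); [apply x_of_bound, Hs | apply CV_radius_binom3_coef]. }
  apply ex_pseries_R, Series_correct in Hcv.
  rewrite <- PSeries_binom3_coef_x_of by exact Hs. unfold PSeries.
  apply (is_series_incr_1 (fun n => binom3_coef n * x_of s ^ n)).
  rewrite binom3_coef_0, Rmult_0_l, plus_R, Rplus_0_r.
  exact Hcv.
Qed.

(** * Fibonacci and Lucas numbers *)

Definition beta : R := 1 - alpha.

Lemma sqrt5_sqr : sqrt 5 * sqrt 5 = 5.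
Proof. apply sqrt_sqrt. lra. Qed.

Lemma sqrt5_bounds : 11 / 5 < sqrt 5 < 3.
Proof.
  pose proof sqrt5_sqr. pose proof (sqrt_pos 5).
  split; nra.
Qed.

Lemma alpha_bounds : 8 / 5 < alpha < 2.
Proof. unfold alpha. pose proof sqrt5_bounds. lra. Qed.

Lemma alpha_neq0 : alpha <> 0.
Proof. pose proof alpha_bounds. lra. Qed.

Lemma alpha_sqr : alpha * alpha = alpha + 1.
Proof. unfold alpha. pose proof sqrt5_sqr. nra. Qed.

Lemma beta_sqr : beta * beta = beta + 1.
Proof. unfold beta. pose proof alpha_sqr. nra. Qed.

Lemma alpha_mul_beta : alpha * beta = -1.
Proof. unfold beta. pose proof alpha_sqr. nra. Qed.

Lemma beta_neq0 : beta <> 0.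
Proof. pose proof alpha_mul_beta. intros E. rewrite E in H. lra. Qed.

Lemma alpha_sub_beta : alpha - beta = sqrt 5.
Proof. unfold beta, alpha. field. Qed.

Lemma pow_SS_golden (x : R) (n : nat) : x * x = x + 1 -> x ^ S (S n) = x ^ S n + x ^ n.
Proof. intros Hx. simpl. rewrite <- Rmult_assoc, Hx. ring. Qed.

Lemma fib_pair_binet (n : nat) :
  fib_pair n = ((alpha ^ n - beta ^ n) / sqrt 5, (alpha ^ S n - beta ^ S n) / sqrt 5).
Proof.
  pose proof sqrt5_bounds.
  induction n as [|n IH]; simpl fib_pair.
  - rewrite !pow_1, alpha_sub_beta. f_equal; field; lra.
  - rewrite IH. f_equal.
    rewrite (pow_SS_golden alpha), (pow_SS_golden beta) by (apply alpha_sqr || apply beta_sqr).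
    field. lra.
Qed.

Lemma luc_pair_binet (n : nat) :
  luc_pair n = (alpha ^ n + beta ^ n, alpha ^ S n + beta ^ S n).
Proof.
  induction n as [|n IH]; simpl luc_pair.
  - rewrite !pow_1. unfold beta. f_equal; ring.
  - rewrite IH. f_equal.
    rewrite (pow_SS_golden alpha), (pow_SS_golden beta) by (apply alpha_sqr || apply beta_sqr).
    ring.
Qed.

Lemma beta_eq : beta = -1 * / alpha.
Proof.
  pose proof alpha_mul_beta. pose proof alpha_neq0.
  apply (Rmult_eq_reg_l alpha); [| auto]. field_simplify; lra.
Qed.

Lemma powerRZ_beta (z : Z) : powerRZ beta z = powerRZ (-1) z / powerRZ alpha z.
Proof. rewrite beta_eq, powerRZ_mult, powerRZ_inv'. reflexivity. Qed.

Lemma pow_m1_cases (n : nat) : (-1) ^ n = 1 \/ (-1) ^ n = -1.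
Proof.
  induction n as [| n [IH | IH]]; simpl; [left | right | left]; try rewrite IH; ring.
Qed.

Lemma powerRZ_m1_cases (z : Z) : powerRZ (-1) z = 1 \/ powerRZ (-1) z = -1.
Proof.
  destruct z as [| n | n]; simpl; [now left | apply pow_m1_cases |].
  destruct (pow_m1_cases (Pos.to_nat n)) as [-> | ->]; [left | right]; field.
Qed.

Lemma pow_m1_double (k : nat) : (-1) ^ (2 * k) = 1.
Proof. rewrite pow_mult. replace ((-1) ^ 2) with 1 by ring. apply pow1. Qed.

Lemma powerRZ_opp_nat (x : R) (n : nat) : powerRZ x (- Z.of_nat n) = / x ^ n.
Proof. rewrite powerRZ_neg', <- pow_powerRZ. reflexivity. Qed.

Lemma Fib_binet (z : Z) : Fib z = (powerRZ alpha z - powerRZ beta z) / sqrt 5.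
Proof.
  rewrite powerRZ_beta. pose proof alpha_neq0. pose proof sqrt5_bounds.
  unfold Fib, fibn. destruct (Z.leb_spec 0 z) as [Hz | Hz].
  - rewrite <- (Z2Nat.id z) at 2 3 4 by lia. rewrite <- !pow_powerRZ.
    rewrite fib_pair_binet, beta_eq. simpl fst.
    rewrite Rpow_mult_distr, pow_inv. field. split; [apply pow_nonzero; auto | lra].
  - set (n := Z.to_nat (- z)).
    replace z with (- Z.of_nat n)%Z by (unfold n; rewrite Z2Nat.id; lia).
    rewrite !powerRZ_opp_nat, fib_pair_binet, beta_eq. simpl fst.
    assert (Hn : (1 <= n)%nat) by (unfold n; lia). clearbody n.
    destruct n as [| k]; [lia |].
    replace (S k - 1)%nat with k by lia.
    rewrite Rpow_mult_distr, pow_inv. simpl pow.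
    assert (alpha ^ k <> 0) by (apply pow_nonzero; auto).
    destruct (pow_m1_cases k) as [-> | ->]; field; repeat split; lra.
Qed.

Lemma Luc_binet (z : Z) : Luc z = powerRZ alpha z + powerRZ beta z.
Proof.
  rewrite powerRZ_beta. pose proof alpha_neq0.
  unfold Luc, lucn. destruct (Z.leb_spec 0 z) as [Hz | Hz].
  - rewrite <- (Z2Nat.id z) at 2 3 4 by lia. rewrite <- !pow_powerRZ.
    rewrite luc_pair_binet, beta_eq. simpl fst.
    rewrite Rpow_mult_distr, pow_inv. field. apply pow_nonzero; auto.
  - set (n := Z.to_nat (- z)).
    replace z with (- Z.of_nat n)%Z by (unfold n; rewrite Z2Nat.id; lia).
    rewrite !powerRZ_opp_nat, luc_pair_binet, beta_eq. simpl fst.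
    rewrite Rpow_mult_distr, pow_inv.
    assert (alpha ^ n <> 0) by (apply pow_nonzero; auto).
    destruct (pow_m1_cases n) as [-> | ->]; field; repeat split; lra.
Qed.

Lemma Fib_add (p q : Z) : Fib (p + q) = powerRZ alpha q * Fib p + powerRZ beta p * Fib q.
Proof.
  pose proof beta_neq0.
  pose proof sqrt5_bounds.
  rewrite !Fib_binet, !powerRZ_add by (apply alpha_neq0 || auto).
  field. lra.
Qed.

Lemma Fib_add_scaled (p q : Z) :
  powerRZ alpha q * Fib (p + q) - powerRZ (-1) q * Fib p = powerRZ alpha (p + q) * Fib q.
Proof.
  pose proof alpha_neq0. assert (powerRZ alpha q <> 0) by (apply powerRZ_NOR; auto).
  rewrite Z.add_comm at 1. rewrite Fib_add, powerRZ_beta, (Z.add_comm p), powerRZ_add by auto.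
  field. auto.
Qed.

Lemma fibn_SS (n : nat) : fibn (S (S n)) = fibn (S n) + fibn n.
Proof. unfold fibn. simpl. destruct (fib_pair n). simpl. ring. Qed.

Lemma fibn_alpha_bounds (n : nat) : alpha ^ n <= fibn (S (S n)) <= alpha ^ S n.
Proof.
  pose proof alpha_bounds. pose proof alpha_sqr.
  enough (H2 : (alpha ^ n <= fibn (S (S n)) <= alpha ^ S n) /\
               (alpha ^ S n <= fibn (S (S (S n))) <= alpha ^ S (S n))) by apply H2.
  induction n as [| n [IH1 IH2]].
  - unfold fibn; simpl. split; lra.
  - split; [exact IH2 |].
    pose proof (pow_SS_golden alpha n alpha_sqr).
    rewrite fibn_SS, (pow_SS_golden alpha (S n)) by exact alpha_sqr.
    lra.
Qed.

Lemma fibn_S_bounds (n : nat) : 0 < fibn (S n) <= alpha ^ n.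
Proof.
  pose proof alpha_bounds.
  destruct n as [| n].
  - unfold fibn; simpl. lra.
  - pose proof (fibn_alpha_bounds n). pose proof (pow_lt alpha n ltac:(lra)). lra.
Qed.

Lemma fibn_ratio_bound (n m : nat) :
  0 < fibn (S n) / (alpha ^ (S n + S (S m)) * fibn (S (S m))) <= / alpha ^ (2 * m + 3).
Proof.
  pose proof alpha_bounds.
  destruct (fibn_S_bounds n) as [Hn1 Hn2]. destruct (fibn_alpha_bounds m) as [Hm _].
  assert (0 < alpha ^ n) by (apply pow_lt; lra).
  assert (0 < alpha ^ m) by (apply pow_lt; lra).
  assert (0 < alpha ^ (m + 3)) by (apply pow_lt; lra).
  replace (alpha ^ (S n + S (S m))) with (alpha ^ n * alpha ^ (m + 3))
    by (rewrite <- pow_add; f_equal; lia).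
  replace (alpha ^ (2 * m + 3)) with (alpha ^ n * alpha ^ (m + 3) * alpha ^ m / alpha ^ n)
    by (rewrite <- !pow_add; replace (n + (m + 3) + m)%nat with (n + (2 * m + 3))%nat by lia;
        rewrite pow_add; field; lra).
  assert (0 < alpha ^ n * alpha ^ (m + 3)) by (apply Rmult_lt_0_compat; lra).
  split.
  - apply Rdiv_lt_0_compat; [lra |]. apply Rmult_lt_0_compat; lra.
  - rewrite Rinv_div. unfold Rdiv.
    apply Rmult_le_compat; [lra | | lra |].
    + apply Rlt_le, Rinv_0_lt_compat, Rmult_lt_0_compat; lra.
    + apply Rinv_le_contravar; [apply Rmult_lt_0_compat; lra |].
      apply Rmult_le_compat_l; lra.
Qed.

Lemma Fib_ratio_bounds (a b : Z) : (1 <= a)%Z -> (b <= -2)%Z ->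
  -1 < Fib a / (powerRZ alpha (a - b) * Fib b) < 1 / 8.
Proof.
  intros Ha Hb. pose proof alpha_bounds.
  set (n := Z.to_nat (a - 1)). set (m := Z.to_nat (- b - 2)).
  replace (Fib a) with (fibn (S n))
    by (unfold Fib; destruct (Z.leb_spec 0 a); [f_equal; unfold n; lia | lia]).
  replace (Fib b) with ((-1) ^ S m * fibn (S (S m)))
    by (unfold Fib; destruct (Z.leb_spec 0 b); [lia | f_equal; [f_equal | f_equal]; unfold m; lia]).
  replace (a - b)%Z with (Z.of_nat (S n + S (S m))) by (unfold n, m; lia).
  rewrite <- pow_powerRZ.
  pose proof (fibn_ratio_bound n m) as [Hpos Hle].
  set (r := fibn (S n) / (alpha ^ (S n + S (S m)) * fibn (S (S m)))) in *.
  assert (0 < alpha ^ (S n + S (S m))) by (apply pow_lt; lra).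
  assert (0 < fibn (S (S m))) by apply fibn_S_bounds.
  assert (H3 : / alpha ^ (2 * m + 3) <= / alpha ^ 3).
  { apply Rinv_le_contravar; [apply pow_lt; lra | apply Rle_pow; [lra | lia]]. }
  assert (1 < alpha ^ 3) by (simpl; nra).
  destruct (Nat.Even_or_Odd m) as [[k Hk] | [k Hk]].
  - replace ((-1) ^ S m) with (-1) by (rewrite Hk, <- tech_pow_Rmult, pow_m1_double; ring).
    replace (fibn (S n) / (alpha ^ (S n + S (S m)) * (-1 * fibn (S (S m))))) with (- r)
      by (unfold r; field; split; lra).
    assert (/ alpha ^ 3 < 1) by (rewrite <- Rinv_1; apply Rinv_lt_contravar; lra).
    lra.
  - replace ((-1) ^ S m) with 1 by (rewrite <- (pow_m1_double (S k)); f_equal; lia).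
    rewrite Rmult_1_l. fold r.
    assert (H5 : / alpha ^ (2 * m + 3) <= / alpha ^ 5).
    { apply Rinv_le_contravar; [apply pow_lt; lra | apply Rle_pow; [lra | lia]]. }
    assert ((8 / 5) ^ 5 <= alpha ^ 5) by (apply pow_incr; lra).
    assert (/ alpha ^ 5 < / 8) by (apply Rinv_lt_contravar; simpl in *; nra).
    lra.
Qed.

Lemma Fib_neq0 (z : Z) : z <> 0%Z -> Fib z <> 0.
Proof.
  intros Hz. unfold Fib. destruct (Z.leb_spec 0 z).
  - replace (Z.to_nat z) with (S (Z.to_nat z - 1)) by lia.
    pose proof (fibn_S_bounds (Z.to_nat z - 1)). lra.
  - replace (Z.to_nat (- z)) with (S (Z.to_nat (- z) - 1)) by lia.
    pose proof (fibn_S_bounds (Z.to_nat (- z) - 1)).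
    destruct (pow_m1_cases (S (Z.to_nat (- z) - 1) - 1)) as [-> | ->]; lra.
Qed.

Lemma Fib_opp (z : Z) : Fib (- z) = - powerRZ (-1) z * Fib z.
Proof.
  pose proof alpha_neq0. pose proof sqrt5_bounds.
  assert (powerRZ alpha z <> 0) by (apply powerRZ_NOR; auto).
  rewrite !Fib_binet, !powerRZ_beta, !powerRZ_neg'.
  destruct (powerRZ_m1_cases z) as [-> | ->]; field; repeat split; lra.
Qed.

(** * Real cube roots *)

Lemma cbrt_cube (y : R) : cbrt y ^ 3 = y.
Proof.
  assert (Hpos : forall t, 0 < t -> Rpower t (1 / 3) ^ 3 = t).
  { intros t Ht. rewrite <- Rpower_pow by apply exp_pos.
    rewrite Rpower_mult. replace (1 / 3 * INR 3) with 1 by (simpl; field).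
    apply Rpower_1, Ht. }
  unfold cbrt. destruct (Rlt_dec 0 y) as [Hy | Hy]; [now apply Hpos |].
  destruct (Rlt_dec y 0) as [Hy' | Hy'].
  - replace ((- Rpower (- y) (1 / 3)) ^ 3) with (- (Rpower (- y) (1 / 3) ^ 3)) by ring.
    rewrite Hpos by lra. ring.
  - simpl. lra.
Qed.

Lemma cube_inj (x y : R) : x ^ 3 = y ^ 3 -> x = y.
Proof.
  intros H. destruct (Rtotal_order x y) as [Hxy | [Hxy | Hxy]]; auto;
    apply cube_lt_cube in Hxy; lra.
Qed.

Lemma cbrt_mult (x y : R) : cbrt (x * y) = cbrt x * cbrt y.
Proof. apply cube_inj. now rewrite Rpow_mult_distr, !cbrt_cube. Qed.

Lemma cbrt_sign (e : R) : e = 1 \/ e = -1 -> cbrt e = e.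
Proof. intros He. apply cube_inj. rewrite cbrt_cube. destruct He as [-> | ->]; ring. Qed.

Lemma cbrt_neq0 (y : R) : y <> 0 -> cbrt y <> 0.
Proof. intros Hy E. pose proof (cbrt_cube y) as H. rewrite E in H. simpl in H. lra. Qed.

Section CubeRootRatio.

Variables u v : R.
Hypothesis Hv : v <> 0.

Lemma cbrt_div_cube : (cbrt u / cbrt v) ^ 3 = u / v.
Proof.
  pose proof (cbrt_neq0 v Hv).
  unfold Rdiv. rewrite Rpow_mult_distr, pow_inv, !cbrt_cube. reflexivity.
Qed.

Lemma cbrt_div_bounds : -1 < u / v < 1 / 8 -> -1 < cbrt u / cbrt v < 1 / 2.
Proof. intros H. apply cube_bounds. now rewrite cbrt_div_cube. Qed.

Lemma x_of_cbrt_div : u <> v -> x_of (cbrt u / cbrt v) = -27 * u * v / (v - u) ^ 2.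
Proof.
  intros Huv. unfold x_of. rewrite cbrt_div_cube.
  field. split; [lra | auto].
Qed.

Lemma theta_of_cbrt_div : -1 < cbrt u / cbrt v ->
  atan (sqrt 3 * cbrt u / (2 * cbrt v + cbrt u)) = theta_of (cbrt u / cbrt v).
Proof.
  intros Hs. pose proof (cbrt_neq0 v Hv). unfold theta_of. f_equal.
  set (s := cbrt u / cbrt v) in *.
  replace (cbrt u) with (s * cbrt v) by (unfold s; field; auto).
  replace (2 * cbrt v + s * cbrt v) with ((2 + s) * cbrt v) by ring.
  field. split; [lra | auto].
Qed.

Lemma lambda_of_cbrt_div : u <> v ->
  ln ((u - v) / (cbrt u - cbrt v) ^ 3) = lambda_of (cbrt u / cbrt v).
Proof.
  intros Huv. pose proof (cbrt_neq0 v Hv) as Hc.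
  pose proof (cbrt_cube u) as Hu3. pose proof (cbrt_cube v) as Hv3.
  set (c := cbrt v) in *. set (s := cbrt u / c).
  assert (Hcu : cbrt u = s * c) by (unfold s; field; auto).
  assert (Hs1 : s <> 1) by (intros E; apply Huv; rewrite <- Hu3, <- Hv3, Hcu, E; ring).
  replace (u - v) with (c ^ 3 * (s ^ 3 - 1)) by (rewrite <- Hu3, <- Hv3, Hcu; ring).
  rewrite Hcu. unfold lambda_of. f_equal.
  replace (s * c - c) with ((s - 1) * c) by ring.
  field. repeat split; auto; intros E; apply Hs1; lra.
Qed.
End CubeRootRatio.

(** * The two points of the theorem *)

Lemma signed_Fib_ratio_bounds (p q : Z) : (p <= -2)%Z -> (2 <= p + q)%Z ->
  -1 < powerRZ (-1) q * Fib p / (powerRZ alpha q * Fib (p + q)) < 1 / 8.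
Proof.
  intros Hp Hpq. pose proof alpha_neq0.
  assert (powerRZ alpha q <> 0) by (apply powerRZ_NOR; auto).
  assert (Fib (p + q) <> 0) by (apply Fib_neq0; lia).
  pose proof (Fib_ratio_bounds (- p) (- (p + q)) ltac:(lia) ltac:(lia)) as Hb.
  replace (- p - - (p + q))%Z with q in Hb by ring.
  replace (powerRZ (-1) q * Fib p / (powerRZ alpha q * Fib (p + q)))
    with (Fib (- p) / (powerRZ alpha q * Fib (- (p + q)))); [exact Hb |].
  rewrite !Fib_opp, powerRZ_add by lra.
  destruct (powerRZ_m1_cases p) as [-> | ->], (powerRZ_m1_cases q) as [-> | ->];
    field; auto.
Qed.



Lemma cube_root_parameter_alpha (p q : Z) : (p <= -2)%Z -> (2 <= p + q)%Z ->
  exists s, -1 < s < 1 / 2 /\ x_of s = ratio p q * powerRZ alpha (2 * p + q)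
            /\ theta1 p q = theta_of s /\ lambda1 p q = lambda_of s.
Proof.
  intros Hp Hpq. pose proof alpha_neq0.
  assert (HAp : powerRZ alpha p <> 0) by (apply powerRZ_NOR; auto).
  assert (HAq : powerRZ alpha q <> 0) by (apply powerRZ_NOR; auto).
  assert (HFp : Fib p <> 0) by (apply Fib_neq0; lia).
  assert (HFq : Fib q <> 0) by (apply Fib_neq0; lia).
  set (u := Fib (p + q)). set (v := powerRZ alpha q * Fib p).
  assert (Hv : v <> 0) by (apply Rmult_integral_contrapositive_currified; auto).
  assert (Hb : -1 < u / v < 1 / 8).
  { pose proof (Fib_ratio_bounds (p + q) p ltac:(lia) Hp) as Hb.
    now replace (p + q - p)%Z with q in Hb by ring. }
  assert (Huv : u <> v) by (intros E; rewrite E, Rdiv_diag in Hb by auto; lra).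
  assert (Hdiff : u - v = powerRZ beta p * Fib q) by (unfold u, v; rewrite Fib_add; ring).
  pose proof (cbrt_div_bounds u v Hv Hb) as Hs.
  exists (cbrt u / cbrt v). split; [exact Hs | split; [| split]].
  - rewrite x_of_cbrt_div by auto.
    replace (v - u) with (- (powerRZ beta p * Fib q)) by lra.
    unfold ratio. fold u. rewrite powerRZ_beta.
    replace (2 * p + q)%Z with (p + p + q)%Z by ring. rewrite !powerRZ_add by auto.
    unfold v. destruct (powerRZ_m1_cases p) as [-> | ->]; field; auto.
  - unfold theta1. fold u v. apply theta_of_cbrt_div; [auto | lra].
  - unfold lambda1. fold u.
    replace (powerRZ alpha (p + q) * Fib p) with (powerRZ alpha p * v)
      by (unfold v; rewrite powerRZ_add by auto; ring).
    replace (powerRZ (-1) p * Fib q) with (powerRZ alpha p * u - powerRZ alpha p * v).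
    2: { rewrite <- Rmult_minus_distr_l, Hdiff, powerRZ_beta. field. auto. }
    rewrite lambda_of_cbrt_div.
    + rewrite !cbrt_mult. f_equal. field. split; apply cbrt_neq0; auto.
    + apply Rmult_integral_contrapositive_currified; auto.
    + intros E. apply Rmult_eq_reg_l in E; auto.
Qed.

Lemma cube_root_parameter_beta (p q : Z) : (p <= -2)%Z -> (2 <= p + q)%Z ->
  exists s, -1 < s < 1 / 2 /\ x_of s = ratio p q * powerRZ beta (2 * p + q)
            /\ theta2 p q ^ 2 = theta_of s ^ 2 /\ lambda2 p q = lambda_of s.
Proof.
  intros Hp Hpq. pose proof alpha_neq0.
  assert (HAp : powerRZ alpha p <> 0) by (apply powerRZ_NOR; auto).
  assert (HAq : powerRZ alpha q <> 0) by (apply powerRZ_NOR; auto).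
  assert (HFp : Fib p <> 0) by (apply Fib_neq0; lia).
  assert (HFd : Fib (p + q) <> 0) by (apply Fib_neq0; lia).
  assert (HFq : Fib q <> 0) by (apply Fib_neq0; lia).
  set (e := powerRZ (-1) q).
  assert (He : e = 1 \/ e = -1) by apply powerRZ_m1_cases.
  set (u := e * Fib p). set (v := powerRZ alpha q * Fib (p + q)).
  assert (Hv : v <> 0) by (apply Rmult_integral_contrapositive_currified; auto).
  pose proof (signed_Fib_ratio_bounds p q Hp Hpq) as Hb. fold e u v in Hb.
  assert (Huv : u <> v) by (intros E; rewrite E, Rdiv_diag in Hb by auto; lra).
  assert (Hdiff : v - u = powerRZ alpha (p + q) * Fib q) by apply Fib_add_scaled.
  pose proof (cbrt_div_bounds u v Hv Hb) as Hs.
  assert (Hcu : cbrt u = e * cbrt (Fib p)) by (unfold u; rewrite cbrt_mult, cbrt_sign; auto).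
  exists (cbrt u / cbrt v). split; [exact Hs | split; [| split]].
  - rewrite x_of_cbrt_div, Hdiff by auto.
    unfold ratio, u. rewrite powerRZ_beta.
    replace (2 * p + q)%Z with (p + p + q)%Z by ring. rewrite !powerRZ_add by (auto || lra).
    unfold v. fold e.
    destruct (powerRZ_m1_cases p) as [-> | ->], He as [-> | ->]; field; auto.
  - unfold theta2. fold e v. rewrite <- theta_of_cbrt_div, Hcu by (auto || lra).
    destruct He as [-> | ->].
    + rewrite !Rmult_1_l. reflexivity.
    + replace (sqrt 3 * (-1 * cbrt (Fib p)) / (2 * cbrt v + -1 * cbrt (Fib p)))
        with (- (sqrt 3 * cbrt (Fib p) / (2 * cbrt v + -1 * cbrt (Fib p))))
        by (unfold Rdiv; ring).
      rewrite atan_opp. ring.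
  - unfold lambda2. fold e v. rewrite <- Hdiff, <- Hcu, <- lambda_of_cbrt_div by auto.
    f_equal.
    replace (v - u) with (- (u - v)) by ring.
    replace ((cbrt v - cbrt u) ^ 3) with (- (cbrt u - cbrt v) ^ 3) by ring.
    rewrite Rdiv_opp_l, Rdiv_opp_r. ring.
Qed.

Lemma powerRZ_mul_nat (x : R) (z : Z) (k : nat) : x <> 0 ->
  powerRZ x (z * Z.of_nat k) = powerRZ x z ^ k.
Proof.
  intros Hx. induction k as [| k IH].
  - now rewrite Z.mul_0_r.
  - rewrite Nat2Z.inj_succ, Z.mul_succ_r, powerRZ_add, IH by auto. simpl. ring.
Qed.

Lemma term_Fib (p q : Z) (k : nat) :
  term Fib p q k = / sqrt 5 * (binom3_coef k * (ratio p q * powerRZ alpha (2 * p + q)) ^ k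
                               - binom3_coef k * (ratio p q * powerRZ beta (2 * p + q)) ^ k).
Proof.
  unfold term, binom3_coef. rewrite Fib_binet, !powerRZ_mul_nat, !Rpow_mult_distr
    by (apply alpha_neq0 || apply beta_neq0).
  unfold Rdiv. ring.
Qed.

Lemma term_Luc (p q : Z) (k : nat) :
  term Luc p q k = binom3_coef k * (ratio p q * powerRZ alpha (2 * p + q)) ^ k
                   + binom3_coef k * (ratio p q * powerRZ beta (2 * p + q)) ^ k.
Proof.
  unfold term, binom3_coef. rewrite Luc_binet, !powerRZ_mul_nat, !Rpow_mult_distr
    by (apply alpha_neq0 || apply beta_neq0).
  unfold Rdiv. ring.
Qed.

Lemma sqrt5_div_10 : sqrt 5 / 10 = / (2 * sqrt 5).
Proof.
  pose proof sqrt5_bounds.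
  replace (/ (2 * sqrt 5)) with (sqrt 5 / (2 * (sqrt 5 * sqrt 5))) by (field; lra).
  rewrite sqrt5_sqr. field.
Qed.

Theorem theorem8 (p q : Z) (hp : (p <= -2)%Z) (hq : (4 <= q)%Z)
    (hpq : (Z.abs p + 1 < q)%Z) :
  is_series (fun n : nat => term Fib p q (S n))
    (6 / sqrt 5 * ((theta1 p q) ^ 2 - (theta2 p q) ^ 2)
     - sqrt 5 / 10 * ((lambda1 p q) ^ 2 - (lambda2 p q) ^ 2))
  /\
  is_series (fun n : nat => term Luc p q (S n))
    (6 * ((theta1 p q) ^ 2 + (theta2 p q) ^ 2)
     - 1 / 2 * ((lambda1 p q) ^ 2 + (lambda2 p q) ^ 2)).
Proof.
  (* [hq] follows from [hpq]. *)
  destruct (cube_root_parameter_alpha p q hp ltac:(lia)) as (s1 & Hs1 & X1 & T1 & L1).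
  destruct (cube_root_parameter_beta p q hp ltac:(lia)) as (s2 & Hs2 & X2 & T2 & L2).
  pose proof (is_series_binom3_coef_x_of s1 Hs1) as S1. rewrite X1 in S1.
  pose proof (is_series_binom3_coef_x_of s2 Hs2) as S2. rewrite X2 in S2.
  rewrite T1, T2, L1, L2. unfold closed_form in S1, S2.
  pose proof sqrt5_bounds.
  split.
  - refine (is_series_ext_R _ _ _ _ (fun n => eq_sym (term_Fib p q (S n))) _
              (is_series_scal (V := R_NormedModule) _ _ _
                 (is_series_minus (V := R_NormedModule) _ _ _ _ S1 S2))).
    rewrite sqrt5_div_10. change (scal ?a ?b) with (a * b).
    change (plus ?a (opp ?b)) with (a - b). field. lra.
  - refine (is_series_ext_R _ _ _ _ (fun n => eq_sym (term_Luc p q (S n))) _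
              (is_series_plus (V := R_NormedModule) _ _ _ _ S1 S2)).
    change (plus ?a ?b) with (a + b). field.
Qed.
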